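(* Two elements $\tau=(w,z)$ and $\tau'=(w',z')$ of $\mathcal K^J$ lie in the same $W$-orbit if and only if $z$ and $z'$ lie in the same $W_J$-conjugacy class in $\mathscr I_J$.
   Context: Let $(W,S)$ be a finite Coxeter system with length function $\ell$ and reflections $T=\{wsw^{-1}:w\in W,s\in S\}$. Let $\mathrm{Aut}(W,S)$ be the automorphisms $\varphi$ of $W$ with $\varphi(S)=S$, and $W^+=W\rtimes\mathrm{Aut}(W,S)$ the group of pairs $(w,\varphi)$ with $(v,\alpha)(w,\beta)=(v\,\alpha(w),\alpha\beta)$; set $\ell(w,\varphi)=\ell(w)$ and identify $w$ with $(w,1)$. $z\in W^+$ is a perfect involution if $z^2=1$ and $(zt)^4=1$ for all $t\in T$. For $J\subseteq S$: $W_J=\langle J\rangle$; $\mathscr I_J$ is the set of perfect involutions of $(W_J)^+=W_J\rtimes\mathrm{Aut}(W_J,J)$, on which $W_J$ acts by conjugation $v:(y,\theta)\mapsto(v\,y\,\theta(v)^{-1},\theta)$. $W^J=\{w\in W:\ell(ws)>\ell(w)\ \forall s\in J\}$, $\mathcal K^J=W^J\times\mathscr I_J$. For $s\in S$ and $\tau=(w,z)\in\mathcal K^J$: $s\tau=(sw,z)$ if $sw\in W^J$; otherwise $t:=w^{-1}sw\in J$ and $s\tau=(w,tzt)$. This extends to an action of $W$ on $\mathcal K^J$. *)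

From mathcomp Require Import all_boot all_fingroup.
Set Implicit Arguments. Unset Strict Implicit. Unset Printing Implicit Defensive.

Local Open Scope group_scope.

Section Coxeter.
Variable gT : finGroupType.

(* (W,S) with W := <<S>> is a (finite) Coxeter system: S consists of
   involutions, and W has the Coxeter presentation
   < S | (s t)^(m(s,t)) = 1 >, m(s,t) = order of s t, expressed by the
   universal property of the presentation (tested against finite groups). *)
Definition coxeter_system (S : {set gT}) : Prop :=
  1 \notin S /\
  (forall s, s \in S -> s ^+ 2 = 1) /\
  forall (hT : finGroupType) (f : gT -> hT),
    (forall s t, s \in S -> t \in S -> (f s * f t) ^+ #[s * t] = 1) ->
    exists phi : {morphism <<S>> >-> hT}, forall s, s \in S -> phi s = f s.

Definition ball (S : {set gT}) (k : nat) : {set gT} :=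
  iter k (fun B : {set gT} => B :|: (B * S)) [set 1].

(* length function: least k such that w is a product of k elements of S
   (every element of <<S>> has length <= #|gT|) *)
Definition clen (S : {set gT}) (w : gT) : nat :=
  find (fun k => w \in ball S k) (iota 0 #|gT|.+1).

(* minimal left coset representatives W^J *)
Definition minrep (S J : {set gT}) : {set gT} :=
  [set w in <<S>> | [forall s in J, clen S w < clen S (w * s)]].

Definition refls (J : {set gT}) : {set gT} :=
  [set w * s * w^-1 | w in <<J>>, s in J].

Definition AutS (J : {set gT}) : {set {perm gT}} :=
  [set a in Aut <<J>> | a @: J == J].

(* elements of the semidirect product  W_J x| Aut(W_J,J) *)
Definition sd := (gT * {perm gT})%type.

(* (v,a)(w,b) = (v a(w), a b), where a b is the composite x |-> a (b x),
   i.e. the perm product b * a in MathComp's convention *)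
Definition sdmul (x y : sd) : sd := (x.1 * x.2 y.1, y.2 * x.2).
Definition sdone : sd := (1, 1).
Definition sdpow (x : sd) (n : nat) : sd := iter n (sdmul x) sdone.

Definition perfect_inv (J : {set gT}) (z : sd) : bool :=
  [&& z.1 \in <<J>>, z.2 \in AutS J, sdmul z z == sdone &
      [forall t in refls J, sdpow (sdmul z (t, 1)) 4 == sdone]].

Definition conjI (v : gT) (z : sd) : sd := (v * z.1 * (z.2 v)^-1, z.2).

(* action of a generator s on K^J = W^J x I_J *)
Definition kstep (S J : {set gT}) (s : gT) (tau : gT * sd) : gT * sd :=
  let w := tau.1 in let z := tau.2 in
  if s * w \in minrep S J then (s * w, z)
  else let t := w^-1 * s * w in (w, sdmul (sdmul (t, 1) z) (t, 1)).

(* same W-orbit: W is generated (as a monoid) by S, and w = s1...sk acts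
   as s1 (s2 (... (sk tau))) *)
Definition same_orbit (S J : {set gT}) (tau tau' : gT * sd) : Prop :=
  exists ss : seq gT, all (fun s => s \in S) ss /\
                      tau' = foldr (kstep S J) tau ss.

End Coxeter.

From mathcomp Require Import all_boot all_fingroup.
Set Implicit Arguments. Unset Strict Implicit. Unset Printing Implicit Defensive.
Local Open Scope group_scope.

(* The proof has three layers.
   1. Words and length: the length [clen S] is realised by reduced words,
      is subadditive, and equals 1 on generators.
   2. Coxeter combinatorics: from the universal property of the Coxeter
      presentation we get two word invariants, the parity of the length and
      Tits' reflection cocycle (the parity of the number of occurrences of a
      reflection in the left reflection sequence of a word).  They give the
      exchange condition and then Deodhar's lemma: if w is in W^J and s w is
      not, then w^-1 s w lies in J.
   3. The action: by Deodhar's lemma every generator s sends (w, z) to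
      (w', t z t) with t in J, i.e. to (w', conjI t z), so the second
      coordinate stays in the W_J-class of z.  Conversely, walking down a
      reduced word of w leads from (w, z) to (1, z), the generators of W_J
      act on (1, z) by conjugation, and walking up a reduced word of w' leads
      from (1, z') to (w', z'). *)

Section Words.
Variable gT : finGroupType.
Implicit Types (S : {set gT}) (ss : seq gT) (x : gT).

Definition wprod ss : gT := \prod_(a <- ss) a.

Lemma wprod_nil : wprod [::] = 1.
Proof. by rewrite /wprod big_nil. Qed.

Lemma wprod_cons a ss : wprod (a :: ss) = a * wprod ss.
Proof. by rewrite /wprod big_cons. Qed.

Lemma wprod_cat s1 s2 : wprod (s1 ++ s2) = wprod s1 * wprod s2.
Proof. by rewrite /wprod big_cat. Qed.

Lemma wprod_rcons ss a : wprod (rcons ss a) = wprod ss * a.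
Proof. by rewrite -cats1 wprod_cat wprod_cons wprod_nil mulg1. Qed.

Lemma mem_wprod S ss : all (mem S) ss -> wprod ss \in <<S>>.
Proof.
elim: ss => [|a ss IH] /=; first by rewrite wprod_nil group1.
by case/andP=> Sa Sss; rewrite wprod_cons; apply: groupM; [apply: mem_gen | apply: IH].
Qed.

Lemma gen_word S x : x \in <<S>> -> exists ss, all (mem S) ss /\ x = wprod ss.
Proof.
case/gen_prodgP=> n [c Sc ->]; exists [seq c i | i <- index_enum 'I_n].
split; first by apply/allP=> y /mapP [i _ ->]; apply: Sc.
by rewrite /wprod big_map.
Qed.

Lemma ballS S k : ball S k.+1 = ball S k :|: ball S k * S.
Proof. by []. Qed.

Lemma ballP S k x :
  reflect (exists ss, [/\ all (mem S) ss, size ss <= k & x = wprod ss]) (x \in ball S k).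
Proof.
apply: (iffP idP).
  elim: k x => [|k IH] x.
    by rewrite /ball /= inE => /eqP ->; exists [::]; rewrite wprod_nil.
  rewrite ballS inE => /orP [/IH [ss [Sss le_ss ->]]|].
    by exists ss; split => //; apply: leqW.
  case/mulsgP=> y s /IH [ss [Sss le_ss ->]] Ss ->.
  exists (rcons ss s); rewrite wprod_rcons size_rcons ltnS le_ss.
  by rewrite -cats1 all_cat Sss /= Ss.
elim: k x => [|k IH] x [ss [Sss le_ss ->]].
  by move: le_ss; rewrite leqn0 size_eq0 => /eqP ->; rewrite wprod_nil /ball /= inE.
rewrite ballS inE; case/lastP: ss Sss le_ss => [|p a].
  by move=> _ _; rewrite IH //; exists [::].
rewrite -cats1 all_cat size_cat addn1 ltnS /= andbT => /andP [Sp Sa] le_p.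
by rewrite wprod_cat wprod_cons wprod_nil mulg1 mem_mulg ?orbT //; apply: IH; exists p.
Qed.

Lemma ball_mono S k k' : k <= k' -> ball S k \subset ball S k'.
Proof.
move=> le_kk'; apply/subsetP=> x /ballP [ss [Sss le_ss ->]].
by apply/ballP; exists ss; split=> //; apply: leq_trans le_ss le_kk'.
Qed.

Lemma ball_stable S : exists2 k, k <= #|gT| & forall j, k <= j -> ball S j = ball S k.
Proof.
have [/existsP [k /eqP Ek]|nfix] := boolP [exists k : 'I_#|gT|, ball S k == ball S k.+1].
  exists k; first exact: ltnW.
  move=> j /subnKC <-; elim: (j - k) => [|i IH]; first by rewrite addn0.
  by rewrite addnS ballS IH -ballS Ek.
have card_ball k : k <= #|gT| -> k < #|ball S k|.
  elim: k => [|k IH] lt_k; first by rewrite /ball /= cards1.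
  apply: leq_ltn_trans (IH (ltnW lt_k)) (proper_card _).
  rewrite properEneq ball_mono // andbT.
  by apply: contra nfix => /eqP E; apply/existsP; exists (Ordinal lt_k); rewrite E.
by have := card_ball _ (leqnn _); rewrite ltnNge max_card.
Qed.

Lemma gen_ball S x : x \in <<S>> -> x \in ball S #|gT|.
Proof.
case/gen_word=> ss [Sss ->]; have [k le_k stable] := ball_stable S.
have : wprod ss \in ball S (maxn k (size ss)) by apply/ballP; exists ss; rewrite leq_maxr.
by rewrite stable ?leq_maxl //; apply: (subsetP (ball_mono S le_k)).
Qed.

Lemma clenP S x : x \in <<S>> ->
  x \in ball S (clen S x) /\ forall k, x \in ball S k -> clen S x <= k.
Proof.
move=> Sx; have has_k : has (fun k => x \in ball S k) (iota 0 #|gT|.+1).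
  by apply/hasP; exists #|gT|; [rewrite mem_iota ltnSn | apply: gen_ball].
have lt_len : clen S x < #|gT|.+1 by move: has_k; rewrite has_find size_iota.
split; first by have := nth_find 0 has_k; rewrite nth_iota.
move=> k xk; rewrite leqNgt; apply/negP=> lt_k.
by have := before_find 0 lt_k; rewrite nth_iota ?xk // (ltn_trans lt_k).
Qed.

Lemma clen_word S ss : all (mem S) ss -> clen S (wprod ss) <= size ss.
Proof. by move=> Sss; apply: (proj2 (clenP (mem_wprod Sss))); apply/ballP; exists ss. Qed.

Lemma reduced_word S x : x \in <<S>> ->
  exists ss, [/\ all (mem S) ss, size ss = clen S x & x = wprod ss].
Proof.
move=> Sx; have [/ballP [ss [Sss le_ss Ex]] _] := clenP Sx.
by exists ss; split=> //; apply/eqP; rewrite eqn_leq le_ss Ex clen_word.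
Qed.

Lemma clenM S x y : x \in <<S>> -> y \in <<S>> -> clen S (x * y) <= clen S x + clen S y.
Proof.
move=> /reduced_word [s1 [S1 <- ->]] /reduced_word [s2 [S2 <- ->]].
by rewrite -wprod_cat -size_cat clen_word // all_cat S1.
Qed.

Lemma clen1 S : clen S 1 = 0.
Proof. by apply/eqP; rewrite -leqn0 (proj2 (clenP (group1 _))) // /ball /= inE. Qed.

Lemma clen_gen S s : 1 \notin S -> s \in S -> clen S s = 1%N.
Proof.
move=> S'1 Ss; apply/eqP; rewrite eqn_leq.
have := @clen_word S [:: s]; rewrite wprod_cons wprod_nil mulg1 => -> /=; last by rewrite Ss.
rewrite lt0n; apply: contra S'1 => /eqP len0.
by have [] := clenP (mem_gen Ss); rewrite len0 /ball /= inE => /eqP <-.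
Qed.

End Words.

Section ReflectionCocycle.
Variable gT : finGroupType.
Implicit Types (ss : seq gT).

(* the left reflection sequence of s1 ... sn: the elements
   s1 ... s(i-1) si s(i-1) ... s1, for i = 1 .. n *)
Fixpoint rseq ss : seq gT :=
  if ss is a :: ss' then a :: map (fun t => a * t * a^-1) (rseq ss') else [::].

(* Tits' action of a generator a on gT * bool (reflections with a sign) *)
Definition rmove (a : gT) (p : gT * bool) : gT * bool :=
  (a^-1 * p.1 * a, p.2 (+) (p.1 == a)).

Lemma rmove_inj a : injective (rmove a).
Proof.
move=> [x b] [y c] [/(congr1 (fun u => a * u * a^-1))].
by rewrite !mulgA !mulgK !mulgV !mul1g => <- /= /addIb ->.
Qed.

Definition rperm a : {perm gT * bool} := perm (@rmove_inj a).

Lemma conjg_eq (a t x : gT) : (a * t * a^-1 == x) = (t == a^-1 * x * a).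
Proof.
by apply/eqP/eqP => [<-|->]; rewrite !mulgA ?mulVg ?mulgV mul1g ?mulgKV ?mulgK.
Qed.

Lemma rperm_word ss x b : (\prod_(a <- ss) rperm a) (x, b) =
  ((wprod ss)^-1 * x * wprod ss, b (+) odd (count_mem x (rseq ss))).
Proof.
elim: ss x b => [|a ss IH] x b.
  by rewrite big_nil perm1 wprod_nil invg1 mulg1 mul1g /= addbF.
rewrite big_cons permM permE /rmove /= IH wprod_cons invMg !mulgA; congr pair.
rewrite oddD oddb addbA eq_sym count_map; congr (_ (+) odd _).
by apply: eq_count => t /=; rewrite conjg_eq.
Qed.

Fixpoint alt_word (s t : gT) m : seq gT := if m is m'.+1 then s :: t :: alt_word s t m' else [::].

Lemma wprod_alt s t m : wprod (alt_word s t m) = (s * t) ^+ m.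
Proof. by elim: m => [|m IH]; rewrite ?wprod_nil // !wprod_cons IH expgS mulgA. Qed.

Lemma rperm_alt s t m : \prod_(a <- alt_word s t m) rperm a = (rperm s * rperm t) ^+ m.
Proof. by elim: m => [|m IH]; rewrite ?big_nil // !big_cons IH expgS mulgA. Qed.

Lemma rseq_alt s t m : s^-1 = s -> t^-1 = t ->
  rseq (alt_word s t m) = [seq (s * t) ^+ k * s | k <- iota 0 m.*2].
Proof.
move=> invs invt; elim: m => [|m IH] //.
rewrite doubleS /= IH -!map_comp expg0 mul1g expg1 invs (iotaDl 2 0) -map_comp.
congr (_ :: _ :: _); apply: eq_map => k /=.
by rewrite invt add2n (expgS (s * t) k.+1) (expgSr (s * t) k) !mulgA.
Qed.

(* if u has order dividing m, the list u^k s (k < 2m) repeats its first half *)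
Lemma odd_count_alt (u s x : gT) m : u ^+ m = 1 ->
  ~~ odd (count_mem x [seq u ^+ k * s | k <- iota 0 m.*2]).
Proof.
move=> um1; rewrite -addnn iotaD add0n -[in iota m m](addn0 m) iotaDl map_cat count_cat.
rewrite -map_comp (@eq_map _ _ (fun k => u ^+ (m + k) * s) (fun k => u ^+ k * s)).
  by rewrite oddD addn0 addbb.
by move=> k; rewrite expgD um1 mul1g.
Qed.

End ReflectionCocycle.

Section Coxeter.
Variable gT : finGroupType.
Variable S : {set gT}.
Hypothesis coxS : coxeter_system S.
Implicit Types (ss : seq gT) (x : gT).

Lemma gen_neq1 : 1 \notin S. Proof. by case: coxS. Qed.

Lemma gen_inv s : s \in S -> s^-1 = s.
Proof. by case: coxS => _ [sq1 _] Ss; apply/eqP; rewrite eq_invg_mul -expg2 sq1. Qed.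

Lemma gen_sqr s : s \in S -> s * s = 1.
Proof. by move=> Ss; rewrite -{1}(gen_inv Ss) mulVg. Qed.

Lemma word_invariant (hT : finGroupType) (f : gT -> hT) ss1 ss2 :
  (forall s t, s \in S -> t \in S -> (f s * f t) ^+ #[s * t] = 1) ->
  all (mem S) ss1 -> all (mem S) ss2 -> wprod ss1 = wprod ss2 ->
  \prod_(a <- ss1) f a = \prod_(a <- ss2) f a.
Proof.
case: coxS => _ [_ univ] frel; have [phi phiS] := univ _ f frel.
have phi_word ss : all (mem S) ss -> phi (wprod ss) = \prod_(a <- ss) f a.
  elim: ss => [|a ss IH] /=; first by rewrite wprod_nil big_nil morph1.
  case/andP=> Sa Sss; rewrite wprod_cons big_cons morphM ?(mem_gen Sa) ?(mem_wprod Sss) //.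
  by rewrite phiS // IH.
by move=> S1 S2 E; rewrite -!phi_word // E.
Qed.

Lemma tperm_expg n : (tperm false true ^+ n) false = odd n.
Proof.
elim: n => [|n IH]; first by rewrite expg0 perm1.
by rewrite expgSr permM IH /=; case: (odd n); rewrite ?tpermR ?tpermL.
Qed.

Lemma odd_size_invariant ss1 ss2 : all (mem S) ss1 -> all (mem S) ss2 ->
  wprod ss1 = wprod ss2 -> odd (size ss1) = odd (size ss2).
Proof.
move=> S1 S2 E; have sgn ss : \prod_(a <- ss) tperm false true = tperm false true ^+ size ss.
  by elim: ss => [|a ss IH]; rewrite ?big_nil ?big_cons ?IH ?expgS.
pose sign (_ : gT) : {perm bool} := tperm false true.
have sign_rel s t : s \in S -> t \in S -> (sign s * sign t) ^+ #[s * t] = 1.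
  by rewrite tperm2 expg1n.
have := word_invariant sign_rel S1 S2 E; rewrite !sgn.
by move=> /(congr1 (fun p : {perm bool} => p false)); rewrite !tperm_expg.
Qed.

Lemma odd_count_invariant ss1 ss2 x : all (mem S) ss1 -> all (mem S) ss2 ->
  wprod ss1 = wprod ss2 -> odd (count_mem x (rseq ss1)) = odd (count_mem x (rseq ss2)).
Proof.
move=> S1 S2 E; have rrel s t : s \in S -> t \in S -> (rperm s * rperm t) ^+ #[s * t] = 1.
  move=> Ss St; apply/permP => -[y b]; rewrite -rperm_alt rperm_word wprod_alt expg_order.
  rewrite invg1 mulg1 mul1g perm1 rseq_alt ?gen_inv //.
  by rewrite (negbTE (odd_count_alt s y (expg_order _))) addbF.
have := congr1 (fun p : {perm gT * bool} => (p (x, false)).2) (word_invariant rrel S1 S2 E).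
by rewrite /= !rperm_word.
Qed.

Lemma odd_clen ss : all (mem S) ss -> odd (clen S (wprod ss)) = odd (size ss).
Proof.
move=> Sss; have [rs [Srs <- Ers]] := reduced_word (mem_wprod Sss).
exact: odd_size_invariant.
Qed.

Lemma clen_mulr_gen x s : x \in <<S>> -> s \in S -> clen S (x * s) != clen S x.
Proof.
move=> /reduced_word [r [Sr <- ->]] Ss; rewrite -wprod_rcons.
have Srs : all (mem S) (rcons r s) by rewrite -cats1 all_cat Sr /= Ss.
apply/eqP => E; have := odd_clen Srs; rewrite E size_rcons /=.
by case: (odd _).
Qed.

Lemma rseq_del ss t : all (mem S) ss -> t \in rseq ss ->
  exists ss', [/\ all (mem S) ss', (size ss').+1 = size ss & t * wprod ss = wprod ss'].
Proof.
elim: ss t => [|a ss IH] t //= /andP [Sa Sss]; rewrite in_cons => /orP [/eqP ->|].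
  by exists ss; rewrite wprod_cons mulgA gen_sqr // mul1g.
case/mapP=> t' t'ss ->; have [q [Sq szq Eq]] := IH _ Sss t'ss.
by exists (a :: q); rewrite /= Sa szq !wprod_cons -Eq !mulgA mulgKV.
Qed.

Lemma clen_rseq ss t : all (mem S) ss -> t \in rseq ss -> clen S (t * wprod ss) < size ss.
Proof. by move=> Sss /(rseq_del Sss) [q [Sq <- ->]]; rewrite ltnS clen_word. Qed.

Lemma rseq_rcons ss a : rseq (rcons ss a) = rcons (rseq ss) (wprod ss * a * (wprod ss)^-1).
Proof.
elim: ss => [|b ss IH] /=; first by rewrite wprod_nil invg1 mulg1 mul1g.
by rewrite IH map_rcons wprod_cons invMg !mulgA.
Qed.

Lemma exchange x s ss : s \in S -> all (mem S) ss -> x = wprod ss ->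
  clen S (s * x) < clen S x -> s \in rseq ss.
Proof.
move=> Ss Sss Ex lt_sx; have Sx : x \in <<S>> by rewrite Ex mem_wprod.
have [q [Sq szq Eq]] := reduced_word (groupM (mem_gen Ss) Sx).
have s'q : s \notin rseq q.
  apply: contraL lt_sx => /(clen_rseq Sq); rewrite -Eq mulgA gen_sqr // mul1g szq.
  by rewrite -leqNgt => /ltnW.
have := @odd_count_invariant (s :: q) ss s; rewrite /= Ss Sq wprod_cons -Eq mulgA.
rewrite gen_sqr // mul1g -Ex eqxx count_map => /(_ isT Sss erefl).
have -> : count (preim (fun t => s * t * s^-1) (pred1 s)) (rseq q) = 0.
  by rewrite -(count_memPn s'q); apply: eq_count => t /=; rewrite conjg_eq mulVg mul1g.
by move=> odd_s; apply/negPn/negP => /count_memPn c0; move: odd_s; rewrite c0.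
Qed.

End Coxeter.

Section Deodhar.
Variable gT : finGroupType.
Variables S J : {set gT}.
Hypothesis coxS : coxeter_system S.
Hypothesis sJS : J \subset S.

Lemma minrepP w : reflect (w \in <<S>> /\ forall r, r \in J -> clen S w < clen S (w * r))
                          (w \in minrep S J).
Proof. by rewrite inE; apply: (iffP andP) => -[Sw /forall_inP]. Qed.

Lemma clen_mulgl s x : s \in S -> x \in <<S>> -> clen S (s * x) <= (clen S x).+1.
Proof. by move=> Ss Sx; rewrite -add1n -(clen_gen (gen_neq1 coxS) Ss) clenM ?(mem_gen Ss). Qed.

Lemma minrep_descent w s : w \in minrep S J -> s \in S ->
  clen S (s * w) < clen S w -> s * w \in minrep S J.
Proof.
move=> /minrepP [Sw wmin] Ss lt_sw; apply/minrepP; split=> [|r Jr]; first exact: groupM (mem_gen Ss) Sw.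
have Sr : r \in S := subsetP sJS r Jr.
have := clen_mulgl Ss (groupM (groupM (mem_gen Ss) Sw) (mem_gen Sr)).
rewrite !mulgA (gen_sqr coxS) // mul1g => le_wr.
by rewrite -ltnS (leq_trans _ le_wr) // (leq_ltn_trans lt_sw (wmin r Jr)).
Qed.

(* Deodhar's lemma: if w is in W^J and s w is not, then w^-1 s w lies in J;
   with r in J a right descent of s w, s is exchanged against the last
   letter r of the word (reduced word of w) r *)
Lemma deodhar w s : w \in minrep S J -> s \in S -> s * w \notin minrep S J ->
  w^-1 * s * w \in J.
Proof.
move=> wJ Ss sw'J; have /minrepP [Sw wmin] := wJ.
have Ssw : s * w \in <<S>> := groupM (mem_gen Ss) Sw.
have le_w_sw : clen S w <= clen S (s * w).
  by rewrite leqNgt; apply: contra sw'J; apply: minrep_descent.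
move: sw'J; rewrite inE Ssw /= => /forall_inPn [r Jr].
have Sr : r \in S := subsetP sJS r Jr.
rewrite -leqNgt leq_eqVlt (negbTE (clen_mulr_gen coxS Ssw Sr)) /= => lt_swr.
have [rw [Srw szrw Ew]] := reduced_word Sw.
have : s \in rseq (rcons rw r).
  apply: (exchange coxS (x := w * r)) => //; first by rewrite -cats1 all_cat Srw /= Sr.
    by rewrite wprod_rcons Ew.
  by rewrite mulgA (leq_trans lt_swr) // (leq_trans (clen_mulgl Ss Sw)) // wmin.
rewrite rseq_rcons mem_rcons in_cons -Ew => /orP [/eqP ->|s_rw].
  by rewrite !mulgA mulVg mul1g mulgKV.
by have := clen_rseq coxS Srw s_rw; rewrite -Ew szrw ltnNge le_w_sw.
Qed.

End Deodhar.

Section Action.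
Variable gT : finGroupType.
Variables S J : {set gT}.
Hypothesis coxS : coxeter_system S.
Hypothesis sJS : J \subset S.
Implicit Types (ss : seq gT) (z : sd gT).

Lemma autJ_morph (a : {perm gT}) : a \in Aut <<J>> -> {in <<J>> &, {morph a : x y / x * y}}.
Proof. by move=> AutJa x y Jx Jy; rewrite -!(autmE AutJa) morphM. Qed.

Lemma conjI1 z : z.2 \in Aut <<J>> -> conjI 1 z = z.
Proof.
by case: z => y a /= AutJa; rewrite /conjI -(autmE AutJa) morph1 invg1 mulg1 mul1g.
Qed.

Lemma twist_conjI z t v : z.2 \in Aut <<J>> -> t \in J -> v \in <<J>> ->
  sdmul (sdmul (t, 1) (conjI v z)) (t, 1) = conjI (t * v) z.
Proof.
move=> AutJa Jt Jv; have JJt : t \in <<J>> := mem_gen Jt.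
rewrite /sdmul /conjI /= perm1 mulg1 mul1g autJ_morph // invMg !mulgA.
congr (_ * _, _); have invt : t^-1 = t := gen_inv coxS (subsetP sJS t Jt).
by rewrite -!(autmE AutJa) -morphV // invt.
Qed.

Lemma kstep_conjI s w z v : z.2 \in Aut <<J>> -> s \in S -> w \in minrep S J ->
  v \in <<J>> ->
  (kstep S J s (w, conjI v z)).1 \in minrep S J /\
  exists2 v', v' \in <<J>> & (kstep S J s (w, conjI v z)).2 = conjI v' z.
Proof.
move=> AutJa Ss wJ Jv; rewrite /kstep /=; case: ifP => [swJ|/negbT sw'J] /=.
  by split=> //; exists v.
have Jt := deodhar coxS sJS wJ Ss sw'J.
split=> //; exists (w^-1 * s * w * v); first by rewrite groupM ?(mem_gen Jt).
exact: twist_conjI.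
Qed.

Lemma orbit_conjI ss w z : z.2 \in Aut <<J>> -> all (mem S) ss -> w \in minrep S J ->
  (foldr (kstep S J) (w, z) ss).1 \in minrep S J /\
  exists2 v, v \in <<J>> & (foldr (kstep S J) (w, z) ss).2 = conjI v z.
Proof.
move=> AutJa + wJ; elim: ss => [|s ss IH] /=; first by split=> //; exists 1; rewrite ?conjI1.
case/andP=> Ss /IH [].
by case: (foldr _ _ _) => x y /= xJ [v Jv ->]; apply: kstep_conjI.
Qed.

Definition minword ss :=
  [&& all (mem S) ss, size ss == clen S (wprod ss) & wprod ss \in minrep S J].

Lemma minword_exists w : w \in minrep S J -> exists2 ss, minword ss & w = wprod ss.
Proof.
move=> wJ; have /minrepP [Sw _] := wJ; have [ss [Sss szss Ew]] := reduced_word Sw.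
by exists ss; rewrite // /minword Sss -Ew szss eqxx wJ.
Qed.

Lemma minword_suffix p u : minword (p ++ u) -> minword u.
Proof.
case/and3P; rewrite all_cat size_cat wprod_cat => /andP [Sp Su] /eqP szpu /minrepP [_ pumin].
have Spg := mem_wprod Sp; have Sug := mem_wprod Su.
have szu : size u = clen S (wprod u).
  apply/eqP; rewrite eqn_leq clen_word // andbT -(leq_add2l (size p)) szpu.
  by rewrite (leq_trans (clenM Spg Sug)) // leq_add2r clen_word.
apply/and3P; split=> //; first by rewrite szu.
apply/minrepP; split=> // r Jr; have Sr : r \in <<S>> by rewrite mem_gen ?(subsetP sJS).
rewrite -szu -(ltn_add2l (size p)) szpu (leq_trans (pumin r Jr)) // -mulgA.
by rewrite (leq_trans (clenM Spg (groupM Sug Sr))) // leq_add2r clen_word.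
Qed.

Lemma kstep_up ss z : minword ss -> foldr (kstep S J) (1, z) ss = (wprod ss, z).
Proof.
elim: ss => [|a u IH] /= mw; first by rewrite wprod_nil.
have mwu : minword u := @minword_suffix [:: a] u mw.
by rewrite IH // /kstep /= -wprod_cons; case/and3P: mw => _ _ ->.
Qed.

Lemma kstep_down ss z : minword ss -> foldr (kstep S J) (wprod ss, z) (rev ss) = (1, z).
Proof.
elim: ss => [|a u IH] /= mw; first by rewrite wprod_nil.
have mwu : minword u := @minword_suffix [:: a] u mw.
have /and3P [/andP [Sa _] _ _] := mw; have /and3P [_ _ uJ] := mwu.
by rewrite rev_cons foldr_rcons /kstep /= wprod_cons mulgA (gen_sqr coxS) // mul1g uJ IH.
Qed.

Lemma kstep_conj vs z : z.2 \in Aut <<J>> -> all (mem J) vs ->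
  foldr (kstep S J) (1, z) vs = (1, conjI (wprod vs) z).
Proof.
move=> AutJa; elim: vs => [|a vs IH] /=; first by rewrite wprod_nil conjI1.
case/andP=> Ja Jvs; have Sa : a \in S := subsetP sJS a Ja.
have a'J : a * 1 \notin minrep S J.
  by apply/minrepP => -[_ /(_ a Ja)]; rewrite mulg1 (gen_sqr coxS) // clen1.
rewrite IH // /kstep /= (negbTE a'J) invg1 mul1g !mulg1 wprod_cons.
by rewrite twist_conjI // mem_wprod.
Qed.

End Action.

Theorem mainTheorem10 (gT : finGroupType) (S J : {set gT}) :
  coxeter_system S -> J \subset S ->
  forall (w w' : gT) (z z' : sd gT),
    w \in minrep S J -> perfect_inv J z ->
    w' \in minrep S J -> perfect_inv J z' ->
    (same_orbit S J (w, z) (w', z') <->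
     exists2 v, v \in <<J>> & z' = conjI v z).
Proof.
move=> coxS sJS w w' z z' wJ zI w'J _.
(* of the perfect involution z only its automorphism part matters *)
have AutJz : z.2 \in Aut <<J>> by case/and4P: zI => _; rewrite inE => /andP [].
split=> [[ss [Sss Ez']]|[v Jv ->]].
  have [_ [v Jv Ev]] := orbit_conjI coxS sJS AutJz Sss wJ.
  by exists v; rewrite // -Ev -Ez'.
have [vs [Jvs Ev]] := gen_word Jv.
have [rw mw Ew] := minword_exists wJ.
have [rw' mw' Ew'] := minword_exists w'J.
exists (rw' ++ vs ++ rev rw); split.
  rewrite !all_cat all_rev; case/and3P: mw => -> _ _; case/and3P: mw' => -> _ _ /=.
  by rewrite andbT; apply: sub_all Jvs => x; apply: (subsetP sJS).
by rewrite !foldr_cat Ew kstep_down // kstep_conj // -Ev Ew' kstep_up.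
Qed.
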